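(* There is a unique $\Re$-module homomorphism $\Phi\colon\Re/I_\nu(a,b,c)\to M_\nu(a,b,c)$ sending $1+I_\nu(a,b,c)$ to $m_0$, and $\Phi$ is an isomorphism.
   Context: $\mathbb F$ is algebraically closed with $\operatorname{char}\mathbb F\ne2$. The Racah algebra $\Re$ is the unital associative $\mathbb F$-algebra with generators $A,B,C,D$ and relations $[A,B]=[B,C]=[C,A]=2D$ together with the requirement that each of $\alpha:=[A,D]+AC-BA$, $\beta:=[B,D]+BA-CB$, $\gamma:=[C,D]+CB-AC$ is central in $\Re$; $\delta:=A+B+C$. For $a,b,c,\nu\in\mathbb F$ and $i\in\mathbb Z$: $\theta_i=(a+\tfrac\nu2-i)(a+\tfrac\nu2-i+1)$, $\theta_i^*=(b+\tfrac\nu2-i)(b+\tfrac\nu2-i+1)$, $\varphi_i=i(i-\nu-1)(a+b+c+\tfrac\nu2-i+2)(a+b-c+\tfrac\nu2-i+1)$, $\zeta=(c-b)(c+b+1)(a-\tfrac\nu2)(a+\tfrac\nu2+1)$, $\zeta^*=(a-c)(a+c+1)(b-\tfrac\nu2)(b+\tfrac\nu2+1)$, $\eta=\tfrac\nu2(\tfrac\nu2+1)+a(a+1)+b(b+1)+c(c+1)$. $I_\nu(a,b,c)$ is the left ideal of $\Re$ generated by $B-\theta_0^*$, $(B-\theta_1^* )(A-\theta_0)-\varphi_1$, $\alpha-\zeta$, $\beta-\zeta^*$, $\delta-\eta$. $M_\nu(a,b,c)$ is the $\Re$-module with $\mathbb F$-basis $\{m_i\}_{i\ge0}$ such that $Am_i=\theta_im_i+m_{i+1}$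 ($i\ge0$), $Bm_0=\theta_0^*m_0$, $Bm_i=\theta_i^*m_i+\varphi_im_{i-1}$ ($i\ge1$), and $\alpha,\beta,\delta$ act as $\zeta,\zeta^*,\eta$. *)

From HB Require Import structures.
From mathcomp Require Import all_boot all_order all_algebra.
Set Implicit Arguments. Unset Strict Implicit. Unset Printing Implicit Defensive.
Import Order.TTheory GRing.Theory.
Local Open Scope ring_scope.

Definition commr (S : pzRingType) (x y : S) : S := x * y - y * x.
Definition centralr (S : pzRingType) (x : S) : Prop := forall y : S, x * y = y * x.

Definition alphaR (S : pzRingType) (A B C D : S) : S := commr A D + A * C - B * A.
Definition betaR  (S : pzRingType) (A B C D : S) : S := commr B D + B * A - C * B.
Definition gammaR (S : pzRingType) (A B C D : S) : S := commr C D + C * B - A * C.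
Definition deltaR (S : pzRingType) (A B C : S) : S := A + B + C.

Definition racah_rel (S : pzRingType) (A B C D : S) : Prop :=
  [/\ commr A B = 2%:R * D, commr B C = 2%:R * D & commr C A = 2%:R * D] /\
  [/\ centralr (alphaR A B C D), centralr (betaR A B C D)
    & centralr (gammaR A B C D)].

(* (R; A,B,C,D) is the Racah algebra over F: the generators satisfy the
   defining relations and (R; A,B,C,D) is universal among F-algebras with
   four such elements (= presentation by generators and relations). *)
Definition is_racah_algebra (F : fieldType) (R : algType F) (A B C D : R) : Prop :=
  racah_rel A B C D /\
  forall (S : algType F) (a b c d : S), racah_rel a b c d ->
    exists f : {lrmorphism R -> S},
      [/\ f A = a, f B = b, f C = c, f D = d &
          forall g : {lrmorphism R -> S},
            g A = a -> g B = b -> g C = c -> g D = d -> g =1 f].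

Section Scalars.
Variable F : fieldType.
Definition theta (a nu : F) (i : nat) : F :=
  (a + nu / 2%:R - i%:R) * (a + nu / 2%:R - i%:R + 1).
Definition thetas (b nu : F) (i : nat) : F :=
  (b + nu / 2%:R - i%:R) * (b + nu / 2%:R - i%:R + 1).
Definition phi (a b c nu : F) (i : nat) : F :=
  i%:R * (i%:R - nu - 1) * (a + b + c + nu / 2%:R - i%:R + 2%:R)
       * (a + b - c + nu / 2%:R - i%:R + 1).
Definition zeta (a b c nu : F) : F :=
  (c - b) * (c + b + 1) * (a - nu / 2%:R) * (a + nu / 2%:R + 1).
Definition zetas (a b c nu : F) : F :=
  (a - c) * (a + c + 1) * (b - nu / 2%:R) * (b + nu / 2%:R + 1).
Definition eta (a b c nu : F) : F :=
  nu / 2%:R * (nu / 2%:R + 1) + a * (a + 1) + b * (b + 1) + c * (c + 1).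
End Scalars.

Definition in_I (F : fieldType) (R : algType F) (A B C D : R) (a b c nu : F)
    (x : R) : Prop :=
  exists r1 r2 r3 r4 r5 : R,
    x = r1 * (B - (thetas b nu 0)%:A)
      + r2 * ((B - (thetas b nu 1)%:A) * (A - (theta a nu 0)%:A) - (phi a b c nu 1)%:A)
      + r3 * (alphaR A B C D - (zeta a b c nu)%:A)
      + r4 * (betaR A B C D - (zetas a b c nu)%:A)
      + r5 * (deltaR A B C - (eta a b c nu)%:A).

(* m is an F-basis of V (F acting through k |-> k%:A in R): the map sending
   a finitely supported coefficient sequence (a polynomial) p to
   \sum_i p_i m_i is bijective. *)
Definition is_Fbasis (F : fieldType) (R : algType F) (V : lmodType R)
    (m : nat -> V) : Prop :=
  bijective (fun p : {poly F} => \sum_(i < size p) (p`_i)%:A *: m i).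

Definition M_rel (F : fieldType) (R : algType F) (A B C D : R) (a b c nu : F)
    (V : lmodType R) (m : nat -> V) : Prop :=
  [/\ forall i : nat, A *: m i = (theta a nu i)%:A *: m i + m i.+1,
      B *: m 0%N = (thetas b nu 0)%:A *: m 0%N &
      forall i : nat, B *: m i.+1 =
        (thetas b nu i.+1)%:A *: m i.+1 + (phi a b c nu i.+1)%:A *: m i] /\
  [/\ forall v : V, alphaR A B C D *: v = (zeta a b c nu)%:A *: v,
      forall v : V, betaR A B C D *: v = (zetas a b c nu)%:A *: v
    & forall v : V, deltaR A B C *: v = (eta a b c nu)%:A *: v].

(* Phi is x + I |-> x m_0.  We obtain it as the inverse of the F-linear map
   psi : m_i |-> tau_i + I, where tau_i = (A - theta_(i-1)) ... (A - theta_0),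
   so that m_i = tau_i m_0; the work is to show that psi is R-linear.  The
   defect (x, v) |-> psi (x v) - x psi v obeys a Leibniz rule in x, so it is
   enough to kill it for the generators A, B, C (D = [A, B] / 2 since
   char F <> 2).  It vanishes for A by the choice of tau, for delta and alpha
   because they act by the same scalars on M and on Re / I, and for B on m_0
   and m_1 because of the first two generators of I.  Expanding
   2 alpha = [A, [A, B]] + 2 (A C - B A), with C = delta - A - B, shows that
   the defect of B vanishes on A^2 v once it vanishes on v and A v, which
   propagates along the basis.  Finally psi (x m_0) = x + I, and psi is
   injective because the generators of I annihilate m_0. *)

From Pilot Require Import Defs.
From HB Require Import structures.
From mathcomp Require Import all_boot all_order all_algebra.
From mathcomp Require Import boolp.
Import GRing.Theory.
Local Open Scope ring_scope.

Set Implicit Arguments. Unset Strict Implicit. Unset Printing Implicit Defensive.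

Section RacahRelMorphism.
Variables (F : comPzRingType) (S T : algType F) (f : {rmorphism S -> T}).

Lemma rmorph_commr x y : f (commr x y) = commr (f x) (f y).
Proof. by rewrite /commr rmorphB !rmorphM. Qed.

Lemma racah_rel_inj (A B C D : S) : injective f ->
  racah_rel (f A) (f B) (f C) (f D) -> racah_rel A B C D.
Proof.
move=> f_inj [[hAB hBC hCA] [hal hbe hga]].
have fE : [/\ f (alphaR A B C D) = alphaR (f A) (f B) (f C) (f D),
    f (betaR A B C D) = betaR (f A) (f B) (f C) (f D)
  & f (gammaR A B C D) = gammaR (f A) (f B) (f C) (f D)].
  by split; rewrite /alphaR /betaR /gammaR !(rmorphD, rmorphN, rmorphM, rmorph_commr).
case: fE => fal fbe fga.
by split; split; try move=> y; apply: f_inj;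
  rewrite !(rmorphM, rmorph_nat, rmorph_commr) ?fal ?fbe ?fga.
Qed.
End RacahRelMorphism.

Section RacahInduction.
Variables (F : fieldType) (R : algType F) (P : R -> Prop).
Hypotheses (P1 : P 1) (PM : forall x y, P x -> P y -> P (x * y))
  (PZD : forall k x y, P x -> P y -> P (k *: x + y)).

Definition subalg_pred : {pred R} := fun x => `[< P x >].

Lemma subalg_pred_closed : subalg_closed subalg_pred.
Proof.
split; first exact/asboolP.
- by move=> k x y /asboolP Px /asboolP Py; apply/asboolP/PZD.
- by move=> x y /asboolP Px /asboolP Py; apply/asboolP/PM.
Qed.

HB.instance Definition _ := GRing.isSubalgClosed.Build F R subalg_pred
  (GRing.subalg_closed_semi subalg_pred_closed).

Record subalg_of := SubalgOf { subalg_val : R; subalg_valP : subalg_val \in subalg_pred }.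
HB.instance Definition _ := [isSub for subalg_val].
HB.instance Definition _ := [Choice of subalg_of by <:].
HB.instance Definition _ := [SubChoice_isSubAlgebra of subalg_of by <:].

Lemma racah_algebra_ind (A B C D : R) : is_racah_algebra A B C D ->
  P A -> P B -> P C -> P D -> forall r, P r.
Proof.
(* Universality towards the subalgebra of elements satisfying P gives an
   endomorphism of R factoring through it, which must be the identity. *)
move=> [rel univ] PA PB PC PD r.
have sub x : P x -> x \in subalg_pred by move/asboolP.
pose A' := SubalgOf (sub _ PA); pose B' := SubalgOf (sub _ PB).
pose C' := SubalgOf (sub _ PC); pose D' := SubalgOf (sub _ PD).
have rel' : racah_rel A' B' C' D' by apply: (racah_rel_inj (f := val)) => //; exact: val_inj.
have [f [fA fB fC fD _]] := univ _ _ _ _ _ rel'.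
have [f0 [_ _ _ _ id_uniq]] := univ _ _ _ _ _ rel.
pose vf := val \o f.
pose g : {lrmorphism R -> R} := HB.pack vf (GRing.Linear.on vf) (GRing.RMorphism.on vf).
have fr : g r = r.
  by rewrite (id_uniq g) -?(id_uniq idfun) //= /vf /= ?fA ?fB ?fC ?fD.
by rewrite -fr; apply/asboolP/subalg_valP.
Qed.
End RacahInduction.

Section Commutator.
Variables (F : comPzRingType) (R : algType F).
Implicit Types x y z : R.

Lemma commrr x : commr x x = 0.
Proof. exact: subrr. Qed.

Lemma commr_anti x y : commr y x = - commr x y.
Proof. by rewrite /commr opprB. Qed.

Lemma commrDl x y z : commr (x + y) z = commr x z + commr y z.
Proof. by rewrite /commr mulrDl mulrDr opprD addrACA. Qed.

Lemma commrMr x y z : commr x (y * z) = commr x y * z + y * commr x z.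
Proof. by rewrite /commr mulrBl mulrBr !mulrA addrA subrK. Qed.

Lemma commrZDr k x y z : commr x (k *: y + z) = k *: commr x y + commr x z.
Proof.
by rewrite /commr mulrDr mulrDl -scalerAr -scalerAl scalerBr opprD addrACA.
Qed.

Lemma alphaR_double (A B C D : R) : commr A B = 2%:R * D ->
  alphaR A B C D *+ 2 = A * commr A B - commr A B * A + (A * C - B * A) *+ 2.
Proof.
move=> hAB; rewrite /alphaR -addrA mulrnDl hAB mulr_natl; congr (_ + _).
by rewrite /commr mulrnBl mulrnAr mulrnAl.
Qed.
End Commutator.

Section RacahGenerators.
Variables (F : fieldType) (hF2 : (2%:R : F) != 0) (R : algType F) (A B C D : R).
Hypothesis hR : is_racah_algebra A B C D.

Lemma racah_D_eq : D = 2%:R^-1 *: commr A B.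
Proof.
case: hR => [[[hAB _ _] _] _].
by rewrite hAB mulr_natl -scaler_nat scalerA mulVf // scale1r.
Qed.

Lemma racah_algebra_ind_ABC (P : R -> Prop) : P 1 ->
  (forall x y, P x -> P y -> P (x * y)) ->
  (forall k x y, P x -> P y -> P (k *: x + y)) ->
  P A -> P B -> P C -> forall r, P r.
Proof.
move=> P1 PM PZD PA PB PC.
have P0 : P 0 by rewrite -[0](addNr 1) -scaleN1r; apply: PZD.
have PD : P D.
  have -> : D = 2%:R^-1 *: (A * B) + (- 2%:R^-1 *: (B * A) + 0).
    by rewrite racah_D_eq addr0 scaleNr -scalerBr.
  by apply PZD; [apply PM | apply PZD; [apply PM|]].
exact: (racah_algebra_ind P1 PM PZD hR).
Qed.

Lemma deltaR_central : centralr (deltaR A B C).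
Proof.
case: hR => [[[hAB hBC hCA] _] _].
suff commr_delta r : commr (deltaR A B C) r = 0.
  by move=> r; apply/eqP; rewrite -subr_eq0; apply/eqP/commr_delta.
elim/racah_algebra_ind_ABC: r => [|x y hx hy|k x y hx hy| | |].
- by rewrite /commr mulr1 mul1r subrr.
- by rewrite commrMr hx hy mulr0 mul0r addr0.
- by rewrite commrZDr hx hy scaler0 addr0.
- by rewrite /deltaR !commrDl commrr commr_anti hAB hCA add0r addNr.
- by rewrite /deltaR !commrDl commrr hAB commr_anti hBC addr0 subrr.
- by rewrite /deltaR !commrDl commrr commr_anti hCA hBC addr0 addNr.
Qed.
End RacahGenerators.

Section Defect.
Variables (F : comPzRingType) (R : algType F) (U W : lmodType R).
Variables (psi : {additive U -> W}).
Hypothesis psiZ : forall (k : F) v, psi (k%:A *: v) = k%:A *: psi v.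

Definition defect (x : R) (v : U) : W := psi (x *: v) - x *: psi v.

Lemma defect_is_zmod_morphism x : zmod_morphism (defect x).
Proof.
by move=> v v'; rewrite /defect (scalerBr x) !(raddfB psi) (scalerBr x) !opprD addrACA.
Qed.
HB.instance Definition _ x :=
  GRing.isZmodMorphism.Build U W (defect x) (defect_is_zmod_morphism x).

Lemma defectD x y v : defect (x + y) v = defect x v + defect y v.
Proof. by rewrite /defect !scalerDl raddfD opprD addrACA. Qed.

Lemma defectN x v : defect (- x) v = - defect x v.
Proof. by rewrite /defect !scaleNr raddfN opprB opprK addrC. Qed.

Lemma defectM x y v : defect (x * y) v = x *: defect y v + defect x (y *: v).
Proof. by rewrite /defect -!scalerA scalerBr [RHS]addrC addrA subrK. Qed.

Lemma defect_alg k v : defect k%:A v = 0.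
Proof. by rewrite /defect psiZ subrr. Qed.

Lemma defectZ k x v : defect (k *: x) v = k%:A *: defect x v.
Proof. by rewrite -[k *: x]mulr_algl defectM defect_alg addr0. Qed.

Lemma defect_scalev x k v : defect x (k%:A *: v) = k%:A *: defect x v.
Proof.
have := defectM x k%:A v.
by rewrite defect_alg scaler0 add0r mulr_algr defectZ.
Qed.

Lemma defect_scalar_action x k v :
  (forall v' : U, x *: v' = k%:A *: v') -> (forall w : W, x *: w = k%:A *: w) ->
  defect x v = 0.
Proof. by move=> xU xW; rewrite /defect xU xW psiZ subrr. Qed.
End Defect.

Section RacahDefect.
Variables (F : comPzRingType) (R : algType F) (U W : lmodType R).
Variables (psi : {additive U -> W}) (A B C D : R).
Hypotheses (hAB : commr A B = 2%:R * D)
  (dA : forall v, defect psi A v = 0)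
  (ddelta : forall v, defect psi (deltaR A B C) v = 0)
  (dalpha : forall v, defect psi (alphaR A B C D) v = 0).

Lemma defectB_eq0_AA v : defect psi B v = 0 -> defect psi B (A *: v) = 0 ->
  defect psi B (A *: (A *: v)) = 0.
Proof.
move=> dBv dBAv.
have : defect psi (alphaR A B C D *+ 2) v = 0 by rewrite mulr2n defectD dalpha addr0.
have dC : defect psi C v = 0.
  by have := ddelta v; rewrite /deltaR !defectD dA dBv !add0r.
(* In the Leibniz expansion of [defect (alpha *+ 2) v] every term but
   [defect B (A *: (A *: v))] vanishes. *)
rewrite alphaR_double // /commr !(mulr2n, defectD, defectN, defectM) !dA dC dBv dBAv.
by rewrite !(scaler0, add0r, addr0, oppr0, sub0r) opprK.
Qed.
End RacahDefect.

Section LinearCombination.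
Variables (F : comNzRingType) (R : algType F) (W : lmodType R) (f : nat -> W).

Definition lincomb (p : {poly F}) : W := \sum_(i < size p) (p`_i)%:A *: f i.

Lemma lincomb_widen (p : {poly F}) n : (size p <= n)%N ->
  lincomb p = \sum_(i < n) (p`_i)%:A *: f i.
Proof.
move=> le_p_n; rewrite /lincomb (big_ord_widen n (fun i => (p`_i)%:A *: f i) le_p_n).
rewrite big_mkcond; apply: eq_bigr => i _; case: ifP => // /negbT.
by rewrite -leqNgt => le_p_i; rewrite nth_default // !scale0r.
Qed.

Lemma lincomb_is_zmod_morphism : zmod_morphism lincomb.
Proof.
move=> p q; pose n := maxn (size p) (size q).
rewrite (@lincomb_widen (p - q) n); last by rewrite /n -(size_polyN q) size_polyD.
rewrite (@lincomb_widen p n) ?leq_maxl // (@lincomb_widen q n) ?leq_maxr //.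
by rewrite -sumrB; apply: eq_bigr => i _; rewrite coefB !scalerBl.
Qed.
HB.instance Definition _ :=
  GRing.isZmodMorphism.Build {poly F} W lincomb lincomb_is_zmod_morphism.

Lemma lincombZ k (p : {poly F}) : lincomb (k *: p) = k%:A *: lincomb p.
Proof.
rewrite (@lincomb_widen (k *: p) (size p)) ?size_scale_leq // /lincomb scaler_sumr.
by apply: eq_bigr => i _; rewrite coefZ scalerA mulr_algl scalerA.
Qed.

Lemma lincombXn j : lincomb 'X^j = f j.
Proof.
rewrite /lincomb size_polyXn big_ord_recr /= coefXn eqxx !scale1r big1 ?add0r //.
by move=> i _; rewrite coefXn (ltn_eqF (ltn_ord i)) !scale0r.
Qed.
End LinearCombination.

Lemma lincomb_map (F : comNzRingType) (R : algType F) (W W' : lmodType R)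
    (g : {additive W -> W'}) (f : nat -> W) (p : {poly F}) :
  (forall k w, g (k%:A *: w) = k%:A *: g w) -> g (lincomb f p) = lincomb (g \o f) p.
Proof. by move=> gZ; rewrite /lincomb raddf_sum; apply: eq_bigr => i _; rewrite gZ. Qed.

Section FBasis.
Variables (F : fieldType) (R : algType F) (V : lmodType R) (m : nat -> V).
Hypothesis hbasis : is_Fbasis m.

Lemma Fbasis_span v : exists p, v = lincomb m p.
Proof. by case: hbasis => coord _ coordK; exists (coord v); rewrite -[LHS]coordK. Qed.

Lemma Fbasis_extension (W : lmodType R) (u : nat -> W) :
  exists psi : {additive V -> W},
    (forall k v, psi (k%:A *: v) = k%:A *: psi v) /\ forall j, psi (m j) = u j.
Proof.
case: hbasis => coord mK mcoordK.
have lincomb_mK : cancel (lincomb m) coord := mK.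
have coordK : cancel coord (lincomb m) := mcoordK.
pose coordA : {additive V -> {poly F}} := HB.pack coord
  (GRing.isZmodMorphism.Build _ _ coord (can2_zmod_morphism lincomb_mK coordK)).
have coordZ k v : coord (k%:A *: v) = k *: coord v.
  by apply: (can_inj lincomb_mK); rewrite lincombZ !coordK.
exists (lincomb u \o coordA); split=> [k v | j] /=; first by rewrite coordZ lincombZ.
by rewrite -(lincombXn m j) lincomb_mK lincombXn.
Qed.
End FBasis.

Section RacahQuotient.
Variables (F : fieldType) (hF2 : (2%:R : F) != 0) (R : algType F) (A B C D : R).
Hypothesis hR : is_racah_algebra A B C D.
Variables (a b c nu : F) (V : lmodType R) (m : nat -> V).
Hypotheses (hbasis : is_Fbasis m) (hM : M_rel A B C D a b c nu m).
Variables (Q : lmodType R) (pi : {linear R^o -> Q}).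
Hypotheses (pi_surj : forall q : Q, exists x : R, pi x = q)
  (pi_ker : forall x : R, pi x = 0 <-> in_I A B C D a b c nu x).

Local Notation th := (theta a nu).
Local Notation ths := (thetas b nu).
Local Notation ph := (phi a b c nu).
Local Notation I := (in_I A B C D a b c nu).

Fixpoint tau n : R := if n is k.+1 then (A - (th k)%:A) * tau k else 1.

Lemma pi_mul (x y : R) : pi (x * y) = x *: pi y.
Proof. exact: linearZ. Qed.

Lemma pi_eq (x y : R) : I (x - y) -> pi x = pi y.
Proof. by move/pi_ker => xy0; apply/eqP; rewrite -subr_eq0 -linearB /= xy0. Qed.

Lemma pi_scalar_action z k :
  centralr z -> (forall x, I (x * (z - k%:A))) -> forall q : Q, z *: q = k%:A *: q.
Proof.
move=> z_central zI q; have [x <-] := pi_surj q.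
by rewrite -!pi_mul z_central mulr_algl -mulr_algr; apply: pi_eq; rewrite -mulrBr.
Qed.

Lemma Q_delta (q : Q) : deltaR A B C *: q = (Defs.eta a b c nu)%:A *: q.
Proof.
apply: pi_scalar_action q; first exact: (deltaR_central hF2 hR).
by move=> x; exists 0, 0, 0, 0, x; rewrite !mul0r !add0r.
Qed.

Lemma Q_alpha (q : Q) : alphaR A B C D *: q = (zeta a b c nu)%:A *: q.
Proof.
case: hR => [[_ [alpha_central _ _]] _].
apply: pi_scalar_action q => // x.
by exists 0, 0, x, 0, 0; rewrite !mul0r !add0r !addr0.
Qed.

Lemma m_succ j : m j.+1 = A *: m j - (th j)%:A *: m j.
Proof. by case: hM => [[mA _ _] _]; rewrite mA addrC addKr. Qed.

Lemma m_tau j : m j = tau j *: m 0%N.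
Proof. by elim: j => [|j IH] /=; rewrite ?scale1r // m_succ -scalerA -IH scalerBl. Qed.

Lemma m0_generates (v : V) : exists x, v = x *: m 0%N.
Proof.
have [p ->] := Fbasis_span hbasis v.
exists (\sum_(i < size p) (p`_i)%:A * tau i); rewrite /lincomb scaler_suml.
by apply: eq_bigr => i _; rewrite m_tau scalerA.
Qed.

Lemma I_annihilates_m0 x : I x -> x *: m 0%N = 0.
Proof.
case: hM => [[_ mB0 mB] [malpha mbeta mdelta]].
have g1 : (B - (ths 0%N)%:A) *: m 0%N = 0 by rewrite scalerBl mB0 subrr.
have g2 : ((B - (ths 1%N)%:A) * (A - (th 0%N)%:A) - (ph 1%N)%:A) *: m 0%N = 0.
  rewrite scalerBl -scalerA [(A - _) *: _]scalerBl -m_succ [(B - _) *: _]scalerBl.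
  by rewrite mB addrAC addrK subrr.
have g3 : (alphaR A B C D - (zeta a b c nu)%:A) *: m 0%N = 0.
  by rewrite scalerBl malpha subrr.
have g4 : (betaR A B C D - (zetas a b c nu)%:A) *: m 0%N = 0.
  by rewrite scalerBl mbeta subrr.
have g5 : (deltaR A B C - (Defs.eta a b c nu)%:A) *: m 0%N = 0.
  by rewrite scalerBl mdelta subrr.
move=> [r1 [r2 [r3 [r4 [r5 ->]]]]].
rewrite 4!scalerDl -(scalerA r1) -(scalerA r2) -(scalerA r3) -(scalerA r4).
by rewrite -(scalerA r5) g1 g2 g3 g4 g5 !scaler0 !addr0.
Qed.

Section Extension.
Variables (psi : {additive V -> Q}).
Hypotheses (psiZ : forall k v, psi (k%:A *: v) = k%:A *: psi v)
  (psi_m : forall j, psi (m j) = pi (tau j)).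

Local Notation d := (defect psi).

Lemma defect_on_basis x : (forall j, d x (m j) = 0) -> forall v, d x v = 0.
Proof.
move=> dxm v; have [p ->] := Fbasis_span hbasis v.
rewrite (lincomb_map _ _ (defect_scalev psiZ x)) /lincomb big1 // => i _.
by rewrite /= dxm scaler0.
Qed.

Lemma defectA_eq0 v : d A v = 0.
Proof.
apply: defect_on_basis => j; rewrite /defect -[A *: m j](subrK ((th j)%:A *: m j)).
by rewrite -m_succ raddfD psiZ !psi_m /= pi_mul scalerBl subrK subrr.
Qed.

Lemma defect_delta_eq0 v : d (deltaR A B C) v = 0.
Proof. by case: hM => [_ [_ _ mdelta]]; apply: defect_scalar_action => // w; apply: Q_delta. Qed.

Lemma defect_alpha_eq0 v : d (alphaR A B C D) v = 0.
Proof. by case: hM => [_ [malpha _ _]]; apply: defect_scalar_action => // w; apply: Q_alpha. Qed.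

Lemma defectB_m0_eq0 : d B (m 0%N) = 0.
Proof.
case: hM => [[_ mB0 _] _].
rewrite /defect mB0 psiZ psi_m -!pi_mul -(raddfB pi); apply/pi_ker.
by exists (-1), 0, 0, 0, 0; rewrite !mul0r !addr0 /= !mulr1 mulN1r opprB.
Qed.

Lemma defectB_m1_eq0 : d B (m 1%N) = 0.
Proof.
case: hM => [[_ _ mB] _].
rewrite /defect mB raddfD !psiZ !psi_m -!pi_mul -(raddfD pi) -(raddfB pi); apply/pi_ker.
exists 0, (-1), 0, 0, 0; rewrite !mul0r add0r !addr0 /= !mulr1 mulN1r.
by rewrite opprB mulrBl opprB addrA [_ + (ph 1%N)%:A]addrC.
Qed.

Lemma defectB_eq0 v : d B v = 0.
Proof.
have [[[hAB _ _] _] _] := hR.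
have dBA j : d B (m j) = 0 -> d B (m j.+1) = 0 -> d B (A *: m j) = 0.
  case: hM => [[mA _ _] _] dBj dBj1.
  by rewrite mA raddfD /= (defect_scalev psiZ) dBj dBj1 scaler0 add0r.
suff dBm j : d B (m j) = 0 /\ d B (m j.+1) = 0 by apply: defect_on_basis => j; case: (dBm j).
elim: j => [|j [dBj dBj1]]; first by split; [apply: defectB_m0_eq0 | apply: defectB_m1_eq0].
split=> //; have := defectB_eq0_AA hAB defectA_eq0 defect_delta_eq0 defect_alpha_eq0
  dBj (dBA j dBj dBj1).
have AZ k (w : V) : A *: (k%:A *: w) = k%:A *: (A *: w) by rewrite !scalerA mulr_algl mulr_algr.
case: hM => [[mA _ _] _].
rewrite mA scalerDr AZ !mA !raddfD /= !(defect_scalev psiZ) dBj dBj1.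
by rewrite !scaler0 !add0r.
Qed.

Lemma psi_scalable r v : psi (r *: v) = r *: psi v.
Proof.
suff dr : forall v, d r v = 0 by apply/eqP; rewrite -subr_eq0; apply/eqP/dr.
elim/(racah_algebra_ind_ABC hF2 hR): r => [|x y dx dy|k x y dx dy| | |] w.
- by rewrite /defect !scale1r subrr.
- by rewrite defectM dx dy scaler0 add0r.
- by rewrite defectD (defectZ psiZ) dx dy scaler0 add0r.
- exact: defectA_eq0.
- exact: defectB_eq0.
- by have := defect_delta_eq0 w; rewrite /deltaR !defectD defectA_eq0 defectB_eq0 !add0r.
Qed.

Lemma psi_m0 x : psi (x *: m 0%N) = pi x.
Proof. by rewrite psi_scalable psi_m -pi_mul mulr1. Qed.

Lemma psi_inj : injective psi.
Proof.
move=> v v'; have [x ->] := m0_generates v; have [x' ->] := m0_generates v'.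
rewrite !psi_m0 => /eqP; rewrite -subr_eq0 -linearB => /eqP /pi_ker/I_annihilates_m0.
by rewrite scalerBl => /eqP; rewrite subr_eq0 => /eqP.
Qed.
End Extension.
End RacahQuotient.

Lemma linear_bij_inverse (R : pzRingType) (U W : lmodType R) (f : {linear U -> W}) :
  injective f -> (forall w, exists u, f u = w) ->
  exists g : {linear W -> U}, cancel f g /\ cancel g f.
Proof.
move=> f_inj f_surj.
have f_surjb w : exists u, f u == w by have [u <-] := f_surj w; exists u.
pose g w := xchoose (f_surjb w).
have gK : cancel g f by move=> w; apply/eqP/(xchooseP (f_surjb w)).
have fK : cancel f g by move=> u; apply: f_inj; rewrite gK.
pose gL : {linear W -> U} := HB.pack g (GRing.isLinear.Build R W U *:%R g (can2_linear fK gK)).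
by exists gL.
Qed.

Theorem theorem3p6
  (F : closedFieldType) (hF2 : (2%:R : F) != 0)
  (R : algType F) (A B C D : R) (hR : is_racah_algebra A B C D)
  (a b c nu : F)
  (V : lmodType R) (m : nat -> V)
  (hbasis : is_Fbasis m) (hM : M_rel A B C D a b c nu m)
  (Q : lmodType R) (pi : {linear R^o -> Q})
  (hpi_surj : forall q : Q, exists x : R, pi x = q)
  (hpi_ker : forall x : R, pi x = 0 <-> in_I A B C D a b c nu x) :
  exists Phi : {linear Q -> V},
    [/\ Phi (pi 1) = m 0%N,
        (forall Psi : {linear Q -> V}, Psi (pi 1) = m 0%N -> Psi =1 Phi)
      & bijective Phi].
Proof.
have [psi [psiZ psi_m]] := Fbasis_extension hbasis (pi \o tau A a nu).
have psiR := psi_scalable hF2 hR hbasis hM hpi_surj hpi_ker psiZ psi_m.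
have psi_injective := psi_inj hF2 hR hbasis hM hpi_surj hpi_ker psiZ psi_m.
have psi_m0 := psi_m0 hF2 hR hbasis hM hpi_surj hpi_ker psiZ psi_m.
have psi_lin : linear psi by move=> r v w; rewrite raddfD psiR.
pose psiL : {linear V -> Q} := HB.pack (psi : V -> Q)
  (GRing.isLinear.Build R V Q *:%R psi psi_lin).
have psi_surj q : exists v, psiL v = q.
  by have [x <-] := hpi_surj q; exists (x *: m 0%N); apply: psi_m0.
have [Phi [psiK PhiK]] := @linear_bij_inverse _ _ _ psiL psi_injective psi_surj.
have Phi_pi x : Phi (pi x) = x *: m 0%N by rewrite -psi_m0 psiK.
exists Phi; split; first by rewrite Phi_pi scale1r.
- move=> Psi Psi_m0 q; have [x <-] := hpi_surj q.
  by rewrite -[x]mulr1 pi_mul !linearZ /= Psi_m0 Phi_pi scale1r.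
- by exists psiL.
Qed.
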